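(* Suppose $\mathcal{U}$ is a compatible uniformity for a space $X$ and $\kappa$ is a cardinal. If $A\subseteq X$ is totally bounded and $\mathcal{U}$ (ordered by reverse inclusion) has calibre $(\kappa^+,\omega)$, then $w(A)\le\kappa$.
   Context: All spaces are Tychonoff. A subset $A$ is totally bounded if for every $U\in\mathcal{U}$ there is finite $F\subseteq A$ with $A\subseteq\bigcup_{x\in F}U[x]$, where $U[x]=\{y:(x,y)\in U\}$. A directed set $P$ has calibre $(\mu,\lambda)$ if every subset of $P$ of size $\mu$ contains a subset of size $\lambda$ with an upper bound in $P$. $w(A)$ is the weight (least size of a base) of $A$ as a subspace. *)

From HB Require Import structures.
From mathcomp Require Import all_boot all_order all_algebra.
From mathcomp Require Import all_classical all_reals all_analysis.
Set Implicit Arguments. Unset Strict Implicit. Unset Printing Implicit Defensive.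
Local Open Scope classical_set_scope.
Local Open Scope card_scope.

(* The cardinal kappa is represented by a type K (kappa = |K|). *)

(* |S| = kappa^+  : kappa < |S| and every subset of S has size <= kappa
   or size |S|  (i.e. |S| is the least cardinal above kappa). *)
Definition card_succ_of {T : Type} (K : Type) (S : set T) : Prop :=
  ~ (S #<= [set: K]) /\
  (forall S' : set T, S' `<=` S -> S' #<= [set: K] \/ S' #= S).

Definition countably_infinite {T : Type} (S : set T) : Prop :=
  S #= [set: nat].

Definition entourage_at {X : Type} (U : set (X * X)) (x : X) : set X :=
  [set y | U (x, y)].

Definition totally_bounded_set {X : uniformType} (A : set X) : Prop :=
  forall U, entourage U ->
    exists F : set X, [/\ finite_set F, F `<=` A &
      A `<=` \bigcup_(x in F) entourage_at U x].

(* the uniformity, ordered by reverse inclusion, has calibre (kappa^+, omega):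
   every subset S of size kappa^+ contains a countably infinite subset T with
   an upper bound W (i.e. W in U with W `<=` V for all V in T). *)
Definition uniformity_calibre_succ_omega (X : uniformType) (K : Type) : Prop :=
  forall S : set (set (X * X)), S `<=` entourage -> card_succ_of K S ->
    exists T : set (set (X * X)), [/\ T `<=` S, countably_infinite T &
      exists W, entourage W /\ forall V, T V -> W `<=` V].

Definition subspace_base {X : topologicalType} (A : set X) (B : set (set X)) : Prop :=
  (forall b, B b -> exists O : set X, open O /\ b = A `&` O) /\
  (forall O : set X, open O -> forall x, A x -> O x ->
     exists b, [/\ B b, b x & b `<=` A `&` O]).

Definition weight_le {X : topologicalType} (A : set X) (K : Type) : Prop :=
  exists B : set (set X), subspace_base A B /\ B #<= [set: K].

(* Call a family of entourages cube-separated if no two distinct members V, W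
   satisfy both V <= W.W.W and W <= V.V.V on A.  By Zorn there is a maximal
   cube-separated family D, and maximality makes D dominate the uniformity on A:
   every entourage contains, on A, some member of D.  D has at most kappa
   members: otherwise it has a subfamily of size kappa^+, and the calibre yields
   infinitely many members of it containing a common entourage W; but each such
   member is determined, up to cubing, by which pairs of cells of a fixed finite
   W'-net of A it connects (W'^-1.W' <= W), which leaves finitely many choices.
   The traces on A of the interiors of V[c], for V in D and c in a finite net for
   V, then form a base of A of size kappa * omega = kappa.  For finite kappa the
   calibre instead forces the uniformity itself to be finite, hence discrete by
   the Hausdorff property, and then |A| <= |uniformity| <= kappa. *)

From mathcomp Require Import all_boot all_order all_algebra.
From mathcomp Require Import all_classical all_reals all_analysis.
From mathcomp Require Import wochoice.
From mathcomp Require finmap.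
Set Implicit Arguments. Unset Strict Implicit. Unset Printing Implicit Defensive.
Local Open Scope classical_set_scope.
Local Open Scope card_scope.

Lemma card_le_inj T U (A : set T) (B : set U) (f : T -> U) :
  {in A &, injective f} -> f @` A `<=` B -> A #<= B.
Proof.
move=> fi fAB; rewrite -(card_le_eql (inj_card_eq fi)).
exact: subset_card_le.
Qed.

Lemma pcard_le_fun T (U : pointedType) (A : set T) (B : set U) :
  A #<= B -> exists f : T -> U, {in A &, injective f} /\ f @` A `<=` B.
Proof.
move=> /pcard_leP [f]; exists f; split; first by move=> x y xA yA; apply: inj.
by move=> _ [x xA <-]; apply: funS.
Qed.

Lemma card_le_fun T U (A : set T) (B : set U) : A !=set0 ->
  A #<= B -> exists f : T -> U, {in A &, injective f} /\ f @` A `<=` B.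
Proof.
elim/Ppointed: U B => U B [a Aa] AB; last exact: pcard_le_fun.
by move: AB; rewrite card_le_emptyr => /eqP A0; rewrite A0 in Aa.
Qed.

(** * Well-orders and successor cardinals *)

Section WellOrder.
Variable T : choiceType.

Definition wo_le : rel T := sval (well_ordering_principle T).

Lemma wo_chain_le : wo_chain wo_le predT.
Proof. by move=> A _; apply: (svalP (well_ordering_principle T)). Qed.

Lemma wo_le_min (P : set T) : P !=set0 -> exists2 z, P z & forall y, P y -> wo_le z y.
Proof.
move=> [x Px].
have [|z [[/asboolP Pz zP] _]] :=
  svalP (well_ordering_principle T) (fun y => `[< P y >]).
  by exists x; apply/asboolP.
by exists z => // y Py; apply/zP/asboolP.
Qed.

Lemma wo_le_refl : reflexive wo_le.
Proof. exact: in1T (wo_chain_reflexive wo_chain_le). Qed.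

Lemma wo_le_total : total wo_le.
Proof. exact: in2T (wo_chainW wo_chain_le). Qed.

Lemma wo_le_anti : antisymmetric wo_le.
Proof. exact: in2T (wo_chain_antisymmetric wo_chain_le). Qed.

Lemma wo_le_trans : transitive wo_le.
Proof.
move=> y x z xy yz.
have [m [->|->|->] mP] :=
  @wo_le_min [set w | [\/ w = x, w = y | w = z]] (ex_intro _ x (Or31 _ _ erefl)).
- by apply: mP; apply: Or33.
- suff -> : x = y by [].
  by apply: wo_le_anti; rewrite xy mP //; apply: Or31.
- suff -> : z = y by [].
  by apply: wo_le_anti; rewrite yz mP //; apply: Or32.
Qed.

Definition wo_lt x y := (x != y) && wo_le x y.

Lemma wo_ltNge x y : wo_lt x y = ~~ wo_le y x.
Proof.
rewrite /wo_lt; have [->|nxy] /= := eqVneq x y.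
  by case/orP: (wo_le_total y y) => ->.
apply/idP/idP => [xy|]; last by case/orP: (wo_le_total x y) => ->.
by apply/negP => yx; rewrite (@wo_le_anti x y) ?xy ?yx ?eqxx in nxy.
Qed.

Lemma wo_lt_total x y : x != y -> wo_lt x y || wo_lt y x.
Proof. by rewrite wo_ltNge /wo_lt eq_sym => ->; rewrite orNb. Qed.

Lemma wo_lt_wf : well_founded wo_lt.
Proof.
move=> x; apply: contrapT => nAx.
have [z nAz zmin] := @wo_le_min [set y | ~ Acc wo_lt y] (ex_intro _ x nAx).
apply: nAz; constructor => y; rewrite wo_ltNge => /negP zy.
by apply: contrapT => /zmin.
Qed.

Lemma wo_le_lt_trans x y z : wo_le x y -> wo_lt y z -> wo_lt x z.
Proof.
rewrite !wo_ltNge => xy /negP zy; apply/negP => zx.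
by apply: zy; apply: wo_le_trans xy.
Qed.

Definition wo_min (P : set T) (d : T) : T :=
  xget d [set z | P z /\ forall y, P y -> wo_le z y].

Lemma wo_minP (P : set T) d : P !=set0 ->
  P (wo_min P d) /\ forall y, P y -> wo_le (wo_min P d) y.
Proof.
move=> /wo_le_min [z Pz zmin].
by apply: (@xgetI _ d [set z | P z /\ forall y, P y -> wo_le z y] z).
Qed.

End WellOrder.

Section CardSucc.
Variables (T : choiceType) (K : Type).

Definition wo_seg (S : set T) (m : T) : set T := S `&` [set t | wo_lt t m].

Section Collapse.
Variables S S' : set T.
Hypothesis S'S : S' `<=` S.
Hypothesis segK : forall m, S m -> wo_seg S m #<= [set: K].
Hypothesis S'K : ~ (S' #<= [set: K]).

(* The order isomorphism of S' onto S, by well-founded recursion; it is onto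
   because S' does not fit below any point of S. *)
Definition collapse : T -> T :=
  Fix (@wo_lt_wf T) (fun=> T) (fun s rec =>
    wo_min [set m | S m /\ forall t (h : wo_lt t s), S' t -> wo_lt (rec t h) m] s).

Lemma collapseE s : collapse s =
  wo_min [set m | S m /\ forall t, wo_lt t s -> S' t -> wo_lt (collapse t) m] s.
Proof.
rewrite /collapse Fix_eq // => x f g fg; congr wo_min.
by apply/funext => m; apply/propext; split => -[Sm fm]; split => // t h;
  [rewrite -fg | rewrite fg]; apply: fm.
Qed.

Lemma collapseP s : S' s ->
  [/\ S (collapse s), wo_le (collapse s) s &
      forall t, wo_lt t s -> S' t -> wo_lt (collapse t) (collapse s)].
Proof.
elim/(well_founded_ind (@wo_lt_wf T)): s => s IH S's.
set P := [set m | S m /\ forall t, wo_lt t s -> S' t -> wo_lt (collapse t) m].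
have Ps : P s.
  split=> [|t ts S't]; first exact: S'S.
  by have [_ tt _] := IH t ts S't; apply: wo_le_lt_trans tt ts.
have [[] + + /(_ s Ps)] := wo_minP s (ex_intro _ s Ps); rewrite -collapseE.
by split.
Qed.

Lemma collapse_inj : {in S' &, injective collapse}.
Proof.
move=> s t /set_mem S's /set_mem S't cst.
apply: contrapT => /eqP/wo_lt_total/orP[st|ts].
  by have [_ _ /(_ s st S's)] := collapseP S't; rewrite cst wo_ltNge wo_le_refl.
by have [_ _ /(_ t ts S't)] := collapseP S's; rewrite cst wo_ltNge wo_le_refl.
Qed.

Lemma collapse_onto : S `<=` collapse @` S'.
Proof.
move=> m Sm; apply: contrapT => notim.
have below s : S' s -> wo_lt (collapse s) m.
  elim/(well_founded_ind (@wo_lt_wf T)): s => s IH S's.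
  set P := [set m | S m /\ forall t, wo_lt t s -> S' t -> wo_lt (collapse t) m].
  have Pm : P m by split=> // t ts S't; apply: IH.
  have [_ /(_ m Pm)] := wo_minP s (ex_intro _ m Pm); rewrite -collapseE.
  rewrite /wo_lt => ->; rewrite andbT; apply/eqP => sm.
  by apply: notim; exists s.
apply/S'K/(card_le_trans _ (segK Sm))/(card_le_inj collapse_inj).
by move=> _ [s S's <-]; have [] := collapseP S's; split => //; apply: below.
Qed.

Lemma collapse_card_le : S #<= S'.
Proof.
exact: card_le_trans (subset_card_le collapse_onto) (card_image_le _ _).
Qed.

End Collapse.

Lemma ex_card_succ_sub (Z : set T) :
  ~ (Z #<= [set: K]) -> exists2 S, S `<=` Z & card_succ_of K S.
Proof.
(* the initial segment of Z of order type kappa^+ *)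
move=> ZK; pose S := [set t | Z t /\ wo_seg Z t #<= [set: K]].
have segK m : S m -> wo_seg S m #<= [set: K].
  by move=> [_ mK]; apply: card_le_trans mK; apply: subset_card_le => t [[]].
have SK : ~ (S #<= [set: K]).
  move=> SK; apply: ZK; suff -> : Z = S by [].
  apply/seteqP; split => [t Zt|t []//]; apply: contrapT => nSt.
  have [m [Zm nSm] mmin] := @wo_le_min _ (Z `\` S) (ex_intro _ t (conj Zt nSt)).
  apply: nSm; split => //; apply: card_le_trans SK; apply: subset_card_le.
  move=> u [Zu um]; apply: contrapT => nSu.
  by move: um => /=; rewrite wo_ltNge (mmin u).
exists S => [t []//|]; split => // S' S'S.
have [S'K|S'K] := pselect (S' #<= [set: K]); [by left | right].
by apply: Cantor_Bernstein; [exact: subset_card_le | exact: collapse_card_le S'K].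
Qed.

End CardSucc.

Lemma card_succ_finite T K (S : set T) :
  finite_set [set: K] -> card_succ_of K S -> finite_set S.
Proof.
move=> /finite_setP [n Kn] [SK Ssub]; apply: contrapT => /infiniteP NS.
have [g [g_inj gS]] := card_le_fun (ex_intro _ 0%N I) NS.
have gIS : g @` `I_n.+1 `<=` S by move=> _ [k _ <-]; apply: gS; exists k.
have gI : g @` `I_n.+1 #= `I_n.+1.
  by apply: inj_card_eq => x y _ _; apply: g_inj; rewrite inE.
have [gIK|gIS'] := Ssub _ gIS.
  suff : `I_n.+1 #<= `I_n by rewrite card_le_II ltnn.
  rewrite -(card_le_eql gI); apply: card_le_trans gIK _.
  by move: Kn; rewrite card_eq_le => /andP[].
by apply: (infiniteP S).2 => //; rewrite -(eq_finite_set gIS') (eq_finite_set gI).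
Qed.

(** * Absorbing a countable factor *)

Lemma card_Xnat_le_of_fibers K I (cl : K -> I) (code : K -> nat) (b : I -> nat -> K) :
    injective (fun k => (cl k, code k)) ->
    (forall k, injective (b (cl k))) -> (forall k n, cl (b (cl k) n) = cl k) ->
  [set: K * nat] #<= [set: K].
Proof.
move=> clcode_inj b_inj b_cl.
apply: (@card_le_inj _ _ _ _ (fun kn => b (cl kn.1) (pickle (code kn.1, kn.2)))) => //.
move=> [k n] [k' n'] _ _ /= e.
have ecl : cl k = cl k' by rewrite -(b_cl k (pickle (code k, n))) e b_cl.
move: e; rewrite ecl => /b_inj /(pcan_inj pickleK_inv) [ecode ->].
by rewrite (clcode_inj k k') // ecl ecode.
Qed.

Lemma ex_countably_infinite_partition K : [set: nat] #<= [set: K] ->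
  exists E : set (set K), [/\ E `<=` countably_infinite, trivIset E id,
    E !=set0 & finite_set (~` \bigcup_(C in E) C)].
Proof.
move=> NK.
have [E [Einf Etriv Emax]] :=
  ex_maximal_disjoint_subcollection id (@countably_infinite K).
have finR : finite_set (~` \bigcup_(C in E) C).
  apply: contrapT => /infiniteP NR.
  have [r [rinj rR]] := card_le_fun (ex_intro _ 0%N I) NR.
  have rinf : countably_infinite (range r) by exact: inj_card_eq.
  have rE C z : E C -> C z -> ~ range r z by move=> EC Cz /rR; apply; exists C.
  apply: (Emax (E `|` [set range r])) => [|C [/Einf|->]//|].
    split=> [C|]; first by left.
    by move=> /(_ (range r) (or_intror erefl)) /[dup] /Einf _ /rE; apply; exists 0%N.
  move=> C C' [EC|->] [EC'|->] [z [Cz C'z]] //; first by apply: Etriv => //; exists z.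
    by case: (rE _ _ EC Cz).
  by case: (rE _ _ EC' C'z).
exists E; split=> //; apply/set0P/negP => /eqP E0; apply: infinite_nat.
apply: (card_le_finite NK); apply: sub_finite_set finR => k _ [C].
by rewrite E0.
Qed.

Lemma card_Xnat_le K : [set: nat] #<= [set: K] -> [set: K * nat] #<= [set: K].
Proof.
move=> NK; have [E [Einf Etriv [C0 EC0] finR]] := ex_countably_infinite_partition NK.
pose U := \bigcup_(C in E) C.
pose cl k := xget C0 [set C | E C /\ C k].
have clP k C : E C -> C k -> E (cl k) /\ cl k k.
  by move=> EC Ck; apply: (@xgetI _ C0 [set C | E C /\ C k] C).
have clE k : E (cl k).
  have [[C EC Ck]|Uk] := pselect (U k); first by have [] := clP k C EC Ck.
  by rewrite /cl xgetPN // => C [EC Ck]; apply: Uk; exists C.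
have clK C k : E C -> C k -> cl k = C.
  move=> EC Ck; have [EclK clk] := clP k C EC Ck.
  by apply: Etriv => //; exists k.
have /choice[e e_inj] C : exists f : K -> nat, E C -> {in C &, injective f}.
  have [/Einf|nEC] := pselect (E C); last by exists (fun=> 0%N).
  rewrite /countably_infinite card_eq_le => /andP[/pcard_le_fun [f [f_inj _]] _].
  by exists f.
have /choice[b b_inj] C : exists f : nat -> K, E C -> injective f /\ forall n, C (f n).
  have [EC|nEC] := pselect (E C); last first.
    by have [f _] := card_le_fun (ex_intro _ 0%N I) NK; exists f.
  have /Einf := EC; rewrite /countably_infinite card_eq_le => /andP[_].
  move=> /(card_le_fun (ex_intro _ 0%N I)) [f [f_inj fC]]; exists f => _; split.
    by move=> m n; apply: f_inj; rewrite inE.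
  by move=> n; apply: fC; exists n.
have [rho [rho_inj _]] := pcard_le_fun (finite_set_countable finR).
(* The finite remainder is absorbed into the block C0, using the odd codes. *)
pose code k := if `[< U k >] then (e (cl k) k).*2 else (rho k).*2.+1.
apply: (@card_Xnat_le_of_fibers _ _ cl code b).
- move=> k k' [ecl]; rewrite /code.
  case: asboolP => [[C EC Ck]|Uk]; case: asboolP => [[C' EC' C'k']|Uk'] //.
  + move: ecl; rewrite (clK C k) // (clK C' k') // => CC' /double_inj.
    by subst C'; apply: (e_inj C EC); apply: mem_set.
  + by move=> /(congr1 odd); rewrite /= !odd_double.
  + by move=> /(congr1 odd); rewrite /= !odd_double.
  + by move=> [/double_inj]; apply: rho_inj; apply: mem_set.
- by move=> k; have [] := b_inj _ (clE k).
- by move=> k n; apply: clK (clE k) _; have [] := b_inj _ (clE k).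
Qed.

Lemma card_le_setXR I T K (D : set I) (F : I -> set T) :
    [set: nat] #<= [set: K] -> D #<= [set: K] -> (forall i, D i -> countable (F i)) ->
  D `*`` F #<= [set: K].
Proof.
move=> NK DK Fc; apply: card_le_trans (card_Xnat_le NK).
have [->|/set0P[i0 Di0]] := eqVneq D set0.
  rewrite (_ : set0 `*`` F = set0); first exact: card_ge0.
  by apply/seteqP; split=> -[? ?] [].
have [g [g_inj _]] := card_le_fun (ex_intro _ i0 Di0) DK.
have /choice[j j_inj] i : exists j : T -> nat, D i -> {in F i &, injective j}.
  have [/Fc/pcard_le_fun [j [j_inj _]]|nDi] := pselect (D i); first by exists j.
  by exists (fun=> 0%N).
apply: (@card_le_inj _ _ _ _ (fun p => (g p.1, j p.1 p.2))) => //.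
move=> [i t] [i' t'] /set_mem [/= Di Ft] /set_mem [/= Di' Ft'] [gi jt].
have ii' : i = i' by apply: g_inj gi; apply: mem_set.
by subst i'; congr pair; apply: (j_inj i Di) jt; apply: mem_set.
Qed.

Local Open Scope relation_scope.

Section UniformTools.
Variable X : uniformType.
Implicit Types U V W : set (X * X).

Lemma entourage_split_sym U : entourage U ->
  exists2 W, entourage W & forall x y z, W (z, x) -> W (z, y) -> U (x, y).
Proof.
move=> eU; exists (split_ent U `&` (split_ent U)^-1); first exact: entourage_invI.
by move=> x y z [_ zx] [zy _]; apply: entourage_split zx zy.
Qed.

Lemma entourage_cube U : entourage U -> exists2 V, entourage V & V \; V \; V `<=` U.
Proof.
move=> eU; exists (split_ent (split_ent U)) => // -[a b] [z azVV zbV].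
apply: (@entourage_split _ z) => //; first exact: subset_split_ent azVV.
exact: split_ent_subset zbV.
Qed.

Lemma nbhs_entourage_at U x : entourage U -> nbhs x (entourage_at U x).
Proof. by move=> eU; apply: filterS (nbhs_entourage x eU) => y /xsectionP. Qed.

Variable A : set X.
Hypothesis tbA : totally_bounded_set A.

Lemma totally_bounded_cover U : entourage U ->
  exists n (c : 'I_n -> X), forall a, A a -> exists i, U (c i, a).
Proof.
move=> /tbA [F [/finite_seqP [s ->] _ AF]].
exists (size s), (tnth (in_tuple s)) => a /AF [x xs Uxa].
have /tnthP [i xi] : x \in in_tuple s by [].
by exists i; rewrite -xi.
Qed.

Lemma totally_bounded_interior_nets : exists N : set (X * X) -> set X,
  forall V, entourage V ->
    [/\ finite_set (N V), N V `<=` A & A `<=` \bigcup_(c in N V) (entourage_at V c)°].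
Proof.
suff /choice[N NP] V : exists F, entourage V ->
    [/\ finite_set F, F `<=` A & A `<=` \bigcup_(c in F) (entourage_at V c)°].
  by exists N.
have [eV|nV] := pselect (entourage V); last by exists set0.
have [F [finF FA AF]] := tbA (entourage_split_ent eV).
exists F => _; split=> // a /AF [c Fc ca]; exists c => //.
apply: filterS (nbhs_entourage_at a (entourage_split_ent eV)) => y ay.
exact: entourage_split ca ay.
Qed.

End UniformTools.

(** * Cube-separated families of entourages *)

Section CubeSeparated.
Variables (X : uniformType) (A : set X).
Implicit Types U V W : set (X * X).

Definition sub_on V U := forall a b, A a -> A b -> V (a, b) -> U (a, b).

Definition cube_separated (F : set (set (X * X))) := forall V W, F V -> F W ->
  sub_on V (W \; W \; W) -> sub_on W (V \; V \; V) -> V = W.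

Hypothesis tbA : totally_bounded_set A.

Lemma cube_separated_finite (F : set (set (X * X))) W : cube_separated F ->
  entourage W -> (forall V, F V -> W `<=` V) -> finite_set F.
Proof.
move=> sepF eW WF; have [W1 eW1 W1W] := entourage_split_sym eW.
have [n [c cover]] := totally_bounded_cover tbA eW1.
(* V is coded by the pairs of W1-cells that it connects. *)
pose pattern V : {set 'I_n * 'I_n} :=
  [set ij | `[< exists2 ab, V ab & W1 (c ij.1, ab.1) /\ W1 (c ij.2, ab.2) >]]%SET.
have pattern_sub V V' :
    F V' -> pattern V \subset pattern V' -> sub_on V (V' \; V' \; V').
  move=> FV' /fintype.subsetP sVV' a b Aa Ab Vab.
  have [[i ia] [j jb]] := (cover a Aa, cover b Ab).
  have /sVV' : (i, j) \in pattern V by rewrite inE; apply/asboolP; exists (a, b).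
  rewrite inE => /asboolP [[a' b'] V'ab' /= [ia' jb']].
  exists b'; first by exists a'; first exact: WF FV' _ (W1W _ _ _ ia ia').
  exact: WF FV' _ (W1W _ _ _ jb' jb).
apply: (card_le_finite _ (@finite_finset _ [set: {set 'I_n * 'I_n}])).
apply: (@card_le_inj _ _ _ _ pattern) => // V V' /set_mem FV /set_mem FV' pVV'.
by apply: sepF => //; apply: pattern_sub; rewrite // pVV'.
Qed.

Lemma cube_separated_card_le K (F : set (set (X * X))) :
    uniformity_calibre_succ_omega X K ->
    F `<=` entourage -> cube_separated F ->
  F #<= [set: K].
Proof.
move=> cal Fent sepF; apply: contrapT => /ex_card_succ_sub [S SF Ssucc].
have [T [TS Tinf [W [eW WT]]]] := cal S (subset_trans SF Fent) Ssucc.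
have finT : finite_set T.
  by apply: cube_separated_finite eW WT => V V' /TS/SF FV /TS/SF FV'; apply: sepF.
by apply: infinite_nat; rewrite -(eq_finite_set Tinf).
Qed.

End CubeSeparated.

Section Dominating.
Variables (X : uniformType) (A : set X).
Implicit Types U V W : set (X * X).

Definition dominating_on (D : set (set (X * X))) :=
  forall U, entourage U -> exists2 V, D V & sub_on A V U.

Lemma ex_maximal_cube_separated : exists F, [/\ F `<=` entourage, cube_separated A F &
  forall G, F `<` G -> G `<=` entourage -> ~ cube_separated A G].
Proof.
have [|F [[Fent sepF] Fmax]] :=
    @Zorn_bigcup _ [set F | F `<=` entourage /\ cube_separated A F].
  move=> C CP Ctot; split=> [V [F CF FV]|V W [F CF FV] [F' CF' F'W]].
    exact: (CP F CF).1.
  have [FF'|F'F] := Ctot _ _ CF CF'.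
    by apply: (CP F' CF').2 => //; apply: FF'.
  by apply: (CP F CF).2 => //; apply: F'F.
by exists F; split=> // G FG Gent sepG; apply: Fmax FG (conj Gent sepG).
Qed.

Lemma maximal_cube_separated_dominating F :
    F `<=` entourage -> cube_separated A F ->
    (forall G, F `<` G -> G `<=` entourage -> ~ cube_separated A G) ->
  dominating_on F.
Proof.
move=> Fent sepF Fmax U eU; have [V0 eV0 V0U] := entourage_cube eU.
have dom V : sub_on A V (V0 \; V0 \; V0) -> sub_on A V U.
  by move=> VV0 a b Aa Ab Vab; apply/V0U/VV0.
have [FV0|nFV0] := pselect (F V0).
  exists V0 => //; apply: dom => a b _ _ V0ab.
  by exists b; [exists a => //; apply: entourage_refl | apply: entourage_refl].
apply: contrapT => nV.
have FFV0 : F `<` F `|` [set V0].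
  by split=> [V FV|sub]; [left | apply/nFV0/sub; right].
apply: (Fmax _ FFV0) => [V [/Fent|->] //|V W [FV|->] [FW|->] //].
- exact: sepF.
- by move=> /dom VU; case: nV; exists V.
- by move=> _ /dom WU; case: nV; exists W.
Qed.

Lemma ex_dominating_entourages K : totally_bounded_set A ->
    uniformity_calibre_succ_omega X K ->
  exists2 D, D `<=` entourage /\ D #<= [set: K] & dominating_on D.
Proof.
move=> tbA cal; have [F [Fent sepF Fmax]] := ex_maximal_cube_separated.
exists F; last exact: maximal_cube_separated_dominating Fent sepF Fmax.
by split; last exact: (cube_separated_card_le tbA cal Fent sepF).
Qed.

Lemma dominating_subspace_base (D : set (set (X * X))) (N : set (X * X) -> set X) :
    dominating_on D ->
    (forall V, D V -> N V `<=` A /\ A `<=` \bigcup_(c in N V) (entourage_at V c)°) ->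
  subspace_base A [set A `&` (entourage_at p.1 p.2)° | p in D `*`` N].
Proof.
move=> domD Nnet; split=> [_ [[V c] _ <-]|O oO x Ax Ox].
  by exists (entourage_at V c)°; split=> //; apply: open_interior.
have /nbhsP [E eE EO] : nbhs x O by apply: open_nbhs_nbhs.
have [U eU UE] := entourage_split_sym eE.
have [V DV VU] := domD U eU.
have [NA /(_ x Ax) [c Nc xc]] := Nnet V DV.
exists (A `&` (entourage_at V c)°); split=> //; first by exists (V, c).
move=> y [Ay yc]; split=> //; apply: EO; apply/xsectionP; apply: (UE _ _ c).
  exact: VU (NA c Nc) Ax (interior_subset xc).
exact: VU (NA c Nc) Ay (interior_subset yc).
Qed.

End Dominating.


(** * Finite cardinals *)

(* For finite kappa a family of size kappa^+ is finite, so the calibre can only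
   hold vacuously. *)
Lemma calibre_entourage_card_le (X : uniformType) K : finite_set [set: K] ->
  uniformity_calibre_succ_omega X K -> (@entourage X) #<= [set: K].
Proof.
move=> finK cal; apply: contrapT => /ex_card_succ_sub [S Sent Ssucc].
have [T [TS Tinf _]] := cal S Sent Ssucc.
apply: infinite_nat; rewrite -(eq_finite_set Tinf).
exact: sub_finite_set TS (card_succ_finite finK Ssucc).
Qed.

Section FiniteUniformity.
Import finmap.

Lemma hausdorff_finite_uniformity_diagonal (X : uniformType) :
  hausdorff_space X -> finite_set (@entourage X) -> entourage (@diagonal X).
Proof.
move=> hX /finite_fsetP [E entE].
have /(@filter_bigI _ _ E id) eE : forall U, U \in E -> entourage U.
  by move=> U UE; rewrite entE.
apply: filterS eE => -[x y] xy; apply: (close_eq hX); rewrite entourage_close => U.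
by rewrite entE; apply: xy.
Qed.

End FiniteUniformity.

Section Discrete.
Variable X : uniformType.
Hypothesis eD : entourage (@diagonal X).

Lemma discrete_card_le_entourage : [set: X] #<= (@entourage X).
Proof.
apply: (@card_le_inj _ _ _ _ (fun x => [set p : X * X | p.1 = x \/ p.1 = p.2])).
  move=> x y _ _ /(congr1 (fun S : set (X * X) => S (x, y))) /= exy.
  by have [] : x = y \/ x = y by rewrite -exy; left.
by move=> _ [x _ <-]; apply: filterS eD => p pD; right.
Qed.

Lemma discrete_subspace_base (A : set X) : subspace_base A [set [set x] | x in A].
Proof.
split=> [_ [x Ax <-]|O oO x Ax Ox]; last first.
  by exists [set x]; split=> //; [exists x | move=> _ ->].
exists [set x]; split; last by apply/seteqP; split=> [_ ->|_ [_ ->]].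
rewrite openE => _ ->; apply: filterS (nbhs_entourage x eD) => y /xsectionP.
exact: esym.
Qed.

End Discrete.

Unset Implicit Arguments.

Theorem mainTheorem8 (X : uniformType) (K : Type) (A : set X) :
  hausdorff_space X ->
  totally_bounded_set A ->
  uniformity_calibre_succ_omega X K ->
  weight_le A K.
Proof.
move=> hX tbA cal.
have [finK|/infiniteP NK] := pselect (finite_set [set: K]).
  have entK := calibre_entourage_card_le finK cal.
  have eD := hausdorff_finite_uniformity_diagonal hX (card_le_finite entK finK).
  exists [set [set x] | x in A]; split; first exact: discrete_subspace_base.
  apply: card_le_trans (card_image_le _ _) _.
  apply: card_le_trans (subset_card_le (subsetT A)) _.
  exact: card_le_trans (discrete_card_le_entourage eD) entK.
have [D [Dent DK] domD] := ex_dominating_entourages tbA cal.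
have [N Nnet] := totally_bounded_interior_nets tbA.
exists [set A `&` (entourage_at p.1 p.2)° | p in D `*`` N]; split.
  by apply: dominating_subspace_base domD _ => V /Dent /Nnet [].
apply: card_le_trans (card_image_le _ _) (card_le_setXR NK DK _).
by move=> V /Dent /Nnet [/finite_set_countable].
Qed.
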